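(* Let $k\ge1$, $r=\sqrt[k]{p}$. In multi-level MS with string-based regular sampling using a sampling factor $v=\Theta(kr)=\Theta(k\sqrt[k]{p})$, the number of strings per PE is in $\mathcal{O}(n/p)$ in each level of the algorithm.
   Context: $p$ PEs hold in total $n$ strings, $\Theta(n/p)$ per PE initially. Multi-level MS (with $p=r^k$): each PE sorts its local strings; then on each level $t=1,\dots,k$ the PEs form $r^{t-1}$ groups of $p'=r^{k+1-t}$ consecutive PEs, each group independently sorting the concatenation $S'$ of its PEs' locally sorted arrays $S_i$: $r-1$ splitters $f_1<\dots<f_{r-1}$ are chosen, bucket $B^j=\bigcup_i\{s\in S_i:f_j<s\le f_{j+1}\}$ ($f_0=-\infty,f_r=\infty$) is assigned to the $j$-th subgroup of $p''=p'/r$ PEs such that each PE of that subgroup receives $|B^j|/p''$ strings, and received sequences are merged. String-based regular sampling with factor $v$: with $\omega=|S'|/(p'(v+1))$ (assumed to be an integer), PE $i$ draws $\lceil|S_i|/\omega\rceil-1$ evenly spaced samples from its sorted local array, the first PEs drawing one extra sample if fewer than $p'(v+1)$ samples result; the samples $V$ are sorted globally and $f_j=V[j|V|/r-1]$. *)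

From HB Require Import structures.
From mathcomp Require Import all_boot all_order all_algebra.
Set Implicit Arguments. Unset Strict Implicit. Unset Printing Implicit Defensive.
Import Order.TTheory GRing.Theory Num.Theory.

Section MS.
Context {disp : Order.disp_t} {T : orderType disp}.

Definition group_concat (S : nat -> seq T) (q : nat) : seq T :=
  flatten [seq S i | i <- iota 0 q].

Definition ceil_div (a b : nat) : nat := (a + b.-1) %/ b.

(* the ceil(|s|/w) - 1 evenly spaced samples of the sorted local array s:
   the elements at (1-based) positions w, 2w, ..., (ceil(|s|/w)-1) w *)
Definition regular_samples (w : nat) (s : seq T) : seq T :=
  if s is x :: _ then
    [seq nth x s (j * w).-1 | j <- iota 1 (ceil_div (size s) w).-1]
  else [::].

(* splitter f_j = V[j|V|/r - 1] (0-based), for 1 <= j <= r-1; x0 is an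
   irrelevant default (the index is always in range) *)
Definition splitter (V : seq T) (r j : nat) (x0 : T) : T :=
  nth x0 V ((j * size V) %/ r).-1.

(* s belongs to bucket B^j, i.e. f_j < s <= f_(j+1), with f_0 = -oo, f_r = +oo *)
Definition in_bucket (V : seq T) (r j : nat) (s : T) : bool :=
  ((j == 0) || (splitter V r j s < s)%O) &&
  ((j.+1 == r) || (s <= splitter V r j.+1 s)%O).

Definition ms_group_step (r v p' : nat) (S S' : nat -> seq T) : Prop :=
  let p'' := p' %/ r in
  let A := group_concat S p' in
  exists w : nat, 0 < w /\ size A = w * (p' * v.+1) /\
  exists e : nat -> T,
    let reg := fun i => regular_samples w (S i) in
    let d := p' * v.+1 - \sum_(i < p') size (reg i) in
    (* the first d PEs each draw one extra sample (any further element) *)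
    (forall i, i < d -> e i \in S i /\ e i \notin reg i) /\
    let V := sort <=%O
      (flatten [seq reg i ++ (if i < d then [:: e i] else [::]) | i <- iota 0 p']) in
    forall j, j < r ->
      let B := [seq s <- A | in_bucket V r j s] in
      (* bucket B^j is distributed over the j-th subgroup of p'' PEs *)
      perm_eq (group_concat (fun i => S' (j * p'' + i)) p'') B /\
      (forall i, i < p'' ->
         sorted <=%O (S' (j * p'' + i)) /\ size (S' (j * p'' + i)) * p'' = size B).

Definition ms_level (r k v t : nat) (st st' : nat -> seq T) : Prop :=
  let p' := r ^ (k.+1 - t) in
  forall g, g < r ^ t.-1 ->
    ms_group_step r v p' (fun i => st (g * p' + i)) (fun i => st' (g * p' + i)).

(* st t i = the local array of PE i after level t; st 0 = locally sorted input *)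
Definition ms_execution (r k v : nat) (input : nat -> seq T)
    (st : nat -> nat -> seq T) : Prop :=
  (forall i, st 0 i = sort <=%O (input i)) /\
  (forall t, 1 <= t <= k -> ms_level r k v t (st t.-1) (st t)).

End MS.

From HB Require Import structures.
From mathcomp Require Import all_boot all_order all_algebra.
From mathcomp Require Import zify ring lra.
Set Implicit Arguments.
Unset Strict Implicit.
Unset Printing Implicit Defensive.
Import Order.TTheory GRing.Theory Num.Theory.

(* Inside a group whose concatenated data A has w p' (v+1) strings, the sorted
   sample sequence V has exactly p' (v+1) elements and summarises A at scale w:
   for every down-closed set P of strings, the number of strings of A in P and
   w times the number of samples in P differ by at most w p', since each PE
   contributes at most one incomplete block of w strings and at most one extra
   sample.  As the strings are distinct, the
   splitters have exact ranks j |V| / r in V, so a bucket receives at most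
   w p'' (v+1+2r) strings: both each subgroup and each of its PEs get at most
   (1 + 2r/(v+1)) times their share of A.  By induction over the levels, a PE
   holds at most (n/p) (1 + 2r/(v+1))^k strings, and v >= c k r bounds this
   factor by (1 + 2/(c k))^k, hence by a constant independent of k. *)

Section SortedCount.
Context {disp : Order.disp_t} {T : orderType disp}.
Implicit Types (s : seq T) (P : pred T).

Definition downward_closed P := forall x y : T, (x <= y)%O -> P y -> P x.

Lemma downward_closed_le (y : T) : downward_closed (fun x => x <= y)%O.
Proof. by move=> x z xz zy; apply: le_trans zy. Qed.

Lemma sorted_nth_downward P s x0 : downward_closed P -> sorted <=%O s ->
  forall i, i < size s -> P (nth x0 s i) = (i < count P s).
Proof.
move=> dcP; elim: s => [|x s IHs] //= sorted_xs i.
have ge_x : all (>= x)%O s := order_path_min le_trans sorted_xs.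
have notP : ~~ P x -> forall y, y \in s -> ~~ P y.
  by move=> Px y /(allP ge_x) xy; apply: contra Px; apply: dcP.
have count0 : ~~ P x -> count P s = 0.
  by move=> Px; apply/eqP; rewrite -leqn0 leqNgt -has_count; apply/hasPn; apply: notP.
case: i => [|i] lt_i /=; case: (boolP (P x)) => Px //=.
- by rewrite count0.
- by rewrite IHs ?(path_sorted sorted_xs).
- by rewrite count0 // (negbTE (notP Px _ (mem_nth x0 lt_i))).
Qed.

Lemma count_le_nth_lt_sorted s x0 a : sorted <%O s -> a < size s ->
  count (fun x => x <= nth x0 s a)%O s = a.+1.
Proof.
move=> lt_s a_lt; have le_s : sorted <=%O s by move: lt_s; rewrite lt_sorted_uniq_le => /andP[].
have Hnth := sorted_nth_downward x0 (downward_closed_le (y := nth x0 s a)) le_s.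
apply/anti_leq; rewrite -(Hnth _ a_lt) lexx andbT leqNgt; apply/negP => lt_count.
have a1_lt : a.+1 < size s by apply: leq_trans lt_count (count_size _ _).
have := Hnth _ a1_lt; rewrite lt_count; apply/negP; rewrite -ltNge.
by apply: (sorted_ltn_nth lt_trans) => //; rewrite inE.
Qed.

End SortedCount.

Lemma ceil_div_bounds n w : 0 < w ->
  (ceil_div n w).-1 * w <= n <= (ceil_div n w).-1.+1 * w.
Proof.
move=> w_gt0; rewrite /ceil_div.
have := divn_eq (n + w.-1) w; have := ltn_pmod (n + w.-1) w_gt0; nia.
Qed.

Lemma count_iota_mul_le m w c : 0 < w ->
  count (fun j => j * w <= c) (iota 1 m) = minn m (c %/ w).
Proof.
move=> w_gt0; elim: m => [|m IHm]; first by rewrite min0n.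
rewrite -[m.+1]addn1 iotaD count_cat IHm /= add1n addn0 -(leq_divRL _ _ w_gt0).
by case: leqP; lia.
Qed.

Section RegularSamples.
Context {disp : Order.disp_t} {T : orderType disp}.
Implicit Types (s : seq T) (P : pred T).
Variable w : nat.
Hypothesis w_gt0 : 0 < w.

Lemma regular_samples_index s j : j \in iota 1 (ceil_div (size s) w).-1 ->
  (j * w).-1 < size s.
Proof.
rewrite mem_iota => /andP[j_gt0 j_lt]; have := ceil_div_bounds (size s) w_gt0.
have : j.+1 * w <= (ceil_div (size s) w).-1.+1 * w by rewrite leq_mul2r; lia.
nia.
Qed.

Lemma mem_regular_samples s : {subset regular_samples w s <= s}.
Proof.
rewrite /regular_samples; case: s => [|x s'] // y /mapP[j j_in ->].
exact: mem_nth (regular_samples_index j_in).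
Qed.

Lemma uniq_regular_samples s : uniq s -> uniq (regular_samples w s).
Proof.
rewrite /regular_samples; case: s => [|x s'] // uniq_s.
rewrite map_inj_in_uniq ?iota_uniq // => j1 j2 j1_in j2_in /eqP.
rewrite nth_uniq ?(regular_samples_index j1_in) ?(regular_samples_index j2_in) // => /eqP.
move: j1_in j2_in; rewrite !mem_iota; nia.
Qed.

Lemma count_regular_samples P s : downward_closed P -> sorted <=%O s ->
  count P (regular_samples w s) = minn (ceil_div (size s) w).-1 (count P s %/ w).
Proof.
move=> dcP sorted_s; rewrite -count_iota_mul_le // /regular_samples.
case: s sorted_s => [|x s'] sorted_s; first by rewrite /ceil_div /= divn_small ?prednK.
rewrite count_map; apply: eq_in_count => j j_in /=.
rewrite (sorted_nth_downward _ dcP sorted_s (regular_samples_index j_in)).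
by rewrite prednK // muln_gt0 w_gt0 andbT; move: j_in; rewrite mem_iota => /andP[].
Qed.

Lemma regular_samples_count_bounds P s : downward_closed P -> sorted <=%O s ->
  w * count P (regular_samples w s) <= count P s <= w * (count P (regular_samples w s)).+1.
Proof.
move=> dcP sorted_s; rewrite count_regular_samples //.
have /andP[m_lo m_hi] := ceil_div_bounds (size s) w_gt0.
have c_le := count_size P s.
have c_eq := divn_eq (count P s) w; have c_mod := ltn_pmod (count P s) w_gt0.
set m := (ceil_div _ _).-1 in m_lo m_hi *; set c := count P s in c_le c_eq c_mod *.
move: (c %/ w) (c %% w) c_eq c_mod => q r c_eq r_lt; clearbody m c.
rewrite /minn; case: ltnP => H; apply/andP; split; nia.
Qed.

End RegularSamples.

Section Flatten.
Variables (I T : eqType).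
Implicit Types (F G : I -> seq T) (s : seq I).

Lemma uniq_flatten_map_mem F s i :
  uniq (flatten [seq F j | j <- s]) -> i \in s -> uniq (F i).
Proof.
move=> + i_in; case/splitPr: i_in => s1 s2.
by rewrite map_cat flatten_cat cat_uniq /= cat_uniq => /and3P[_ _ /andP[]].
Qed.

Lemma uniq_flatten_map_subset F G s :
  {in s, forall i, uniq (F i) /\ {subset F i <= G i}} ->
  uniq (flatten [seq G i | i <- s]) -> uniq (flatten [seq F i | i <- s]).
Proof.
move=> FG uniq_G; apply: count_mem_uniq => x.
have count_G := count_uniq_mem x uniq_G.
have count_le : count_mem x (flatten [seq F i | i <- s])
                <= count_mem x (flatten [seq G i | i <- s]).
  rewrite !count_flatten -!map_comp !sumnE !big_map.
  rewrite big_seq [X in _ <= X]big_seq; apply: leq_sum => i i_in /=.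
  have [uniq_Fi sub_Fi] := FG i i_in.
  rewrite count_uniq_mem //; case: (boolP (x \in F i)) => // /sub_Fi.
  by rewrite -has_pred1 has_count.
have le1 : count_mem x (flatten [seq F i | i <- s]) <= 1.
  by apply: leq_trans count_le _; rewrite count_G leq_b1.
by rewrite -has_pred1 has_count; case: (count _ _) le1 => [|[|]].
Qed.

End Flatten.

Section GroupConcat.
Context {disp : Order.disp_t} {T : orderType disp}.

Lemma count_group_concat (P : pred T) (S : nat -> seq T) q :
  count P (group_concat S q) = \sum_(i < q) count P (S i).
Proof.
rewrite /group_concat count_flatten sumnE !big_map.
by rewrite -(big_mkord xpredT (fun i => count P (S i))) /index_iota subn0.
Qed.

Lemma size_group_concat (S : nat -> seq T) q :
  size (group_concat S q) = \sum_(i < q) size (S i).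
Proof. by rewrite -count_predT count_group_concat; apply: eq_bigr => i _; rewrite count_predT. Qed.

Variables (w q : nat) (S : nat -> seq T).
Hypotheses (w_gt0 : 0 < w) (sorted_S : forall i, i < q -> sorted <=%O (S i)).

Lemma group_samples_count_bounds P : downward_closed P ->
  w * count P (group_concat (fun i => regular_samples w (S i)) q)
    <= count P (group_concat S q)
    <= w * (count P (group_concat (fun i => regular_samples w (S i)) q) + q).
Proof.
move=> dcP; rewrite !count_group_concat mulnDr big_distrr /=.
rewrite -[X in _ <= _ <= _ + w * X]card_ord -sum1_card big_distrr -big_split /=.
apply/andP; split; apply: leq_sum => i _;
  have /andP[lo hi] := regular_samples_count_bounds w_gt0 dcP (sorted_S (ltn_ord i)) => //.
by rewrite -mulnDr addn1.
Qed.

End GroupConcat.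

Section Buckets.
Context {disp : Order.disp_t} {T : orderType disp}.
Implicit Types (A V : seq T).

Definition rank_approx (w e : nat) V A := forall P : pred T, downward_closed P ->
  w * count P V <= count P A + w * e /\ count P A <= w * (count P V + e).

Variables (V : seq T) (r b : nat).
Hypotheses (sorted_V : sorted <%O V) (size_V : size V = r * b).
Hypotheses (r_gt0 : 0 < r) (b_gt0 : 0 < b).

Lemma splitter_nth j x : splitter V r j x = nth x V (j * b).-1.
Proof. by rewrite /splitter size_V mulnCA mulKn. Qed.

Lemma splitter_index_lt j : j <= r -> (j * b).-1 < size V.
Proof.
move=> le_jr; have le_jb : j * b <= r * b by rewrite leq_mul2r le_jr orbT.
by rewrite size_V; nia.
Qed.

Lemma splitter_default j x y : j <= r -> splitter V r j x = splitter V r j y.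
Proof.
by move=> le_jr; rewrite !splitter_nth (set_nth_default y x (splitter_index_lt le_jr)).
Qed.

Lemma splitter_le i j x : i <= j <= r -> (splitter V r i x <= splitter V r j x)%O.
Proof.
move=> /andP[le_ij le_jr]; rewrite !splitter_nth.
have le_V : sorted <=%O V by move: sorted_V; rewrite lt_sorted_uniq_le => /andP[].
apply: (sorted_leq_nth le_trans le_refl) => //; rewrite ?inE ?splitter_index_lt //.
  exact: leq_trans le_ij le_jr.
by rewrite -!subn1 leq_sub2r // leq_mul2r le_ij orbT.
Qed.

Lemma count_le_splitter j x : 0 < j <= r ->
  count (fun y => y <= splitter V r j x)%O V = j * b.
Proof.
move=> /andP[j_gt0 le_jr].
by rewrite splitter_nth count_le_nth_lt_sorted ?splitter_index_lt // prednK // muln_gt0 j_gt0.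
Qed.

Lemma count_bucket_le A w e j : rank_approx w e V A -> j < r ->
  count (in_bucket V r j) A <= w * (b + 2 * e).
Proof.
move=> approx lt_jr; have [y0 _] : exists y0, y0 \in V.
  have : 0 < size V by rewrite size_V muln_gt0 r_gt0.
  by case: V => [|y V'] // _; exists y; apply: mem_head.
pose lo : pred T := fun x => (j != 0) && (x <= splitter V r j y0)%O.
pose hi : pred T := fun x => (j.+1 == r) || (x <= splitter V r j.+1 y0)%O.
have bucketE x : in_bucket V r j x = hi x && ~~ lo x.
  rewrite /in_bucket /hi /lo andbC negb_and negbK -ltNge.
  by rewrite (splitter_default x y0 (ltnW lt_jr)) (splitter_default x y0 lt_jr).
have dc_lo : downward_closed lo.
  by move=> x y xy; rewrite /lo => /andP[-> /(le_trans xy)].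
have dc_hi : downward_closed hi.
  by move=> x y xy; rewrite /hi => /orP[-> // | /(le_trans xy) ->]; rewrite orbT.
have count_lo : count lo V = j * b.
  rewrite /lo; case: (posnP j) => [-> | j_gt0]; first exact: count_pred0.
  by rewrite -(count_le_splitter y0 (j := j)) ?j_gt0 ?(ltnW lt_jr).
have count_hi : count hi V = j.+1 * b.
  rewrite /hi; case: eqP => [-> | _]; last exact: count_le_splitter.
  by rewrite -size_V -count_predT; apply: eq_count.
have count_split : count lo A + count (in_bucket V r j) A = count hi A.
  rewrite -[count hi A]size_filter -(count_predC lo) !count_filter.
  congr (_ + _); apply: eq_count => x /=; last by rewrite bucketE andbC.
  case: (boolP (lo x)) => //= /andP[_ le_x]; apply/esym/orP; right.
  by apply: le_trans le_x (splitter_le _ _); rewrite leqnSn.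
have [_ hi_A] := approx hi dc_hi; have [lo_A _] := approx lo dc_lo.
rewrite count_hi mulSn !mulnDr in hi_A; rewrite count_lo in lo_A.
by rewrite mulnDr mulnCA; lia.
Qed.

End Buckets.

Lemma size_flatten_option (U : Type) (c : pred nat) (e : nat -> U) (s : seq nat) :
  size (flatten [seq if c i then [:: e i] else [::] | i <- s]) = count c s.
Proof. by elim: s => //= i s <-; case: (c i). Qed.

Section SampleSequence.
Context {disp : Order.disp_t} {T : orderType disp}.
Variables (w v p : nat) (S : nat -> seq T) (e : nat -> T).

(* These unfold to the number d of extra samples and to the sorted sample
   sequence V of [ms_group_step]. *)
Definition sample_deficit := p * v.+1 - \sum_(i < p) size (regular_samples w (S i)).

Definition extra_samples :=
  flatten [seq if i < sample_deficit then [:: e i] else [::] | i <- iota 0 p].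

Definition sample_sequence := sort <=%O
  (flatten [seq regular_samples w (S i) ++ (if i < sample_deficit then [:: e i] else [::])
           | i <- iota 0 p]).

Let R := group_concat (fun i => regular_samples w (S i)) p.
Let A := group_concat S p.

Lemma perm_sample_sequence : perm_eq sample_sequence (R ++ extra_samples).
Proof.
rewrite perm_sort; apply/permP => a.
rewrite count_cat /R /extra_samples /group_concat !count_flatten !sumnE !big_map -big_split.
by apply: eq_bigr => i _; rewrite count_cat.
Qed.

Hypotheses (w_gt0 : 0 < w) (sorted_S : forall i, i < p -> sorted <=%O (S i)).
Hypotheses (uniq_A : uniq A) (size_A : size A = w * (p * v.+1)).
Hypothesis extra_new : forall i, i < sample_deficit ->
  e i \in S i /\ e i \notin regular_samples w (S i).

Lemma size_regular_group_bounds : size R <= p * v.+1 <= size R + p.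
Proof.
have := group_samples_count_bounds w_gt0 sorted_S (P := predT) (fun _ _ _ _ => isT).
by rewrite !count_predT -/A -/R size_A !leq_pmul2l.
Qed.

Lemma sample_deficit_le : sample_deficit <= p.
Proof.
have /andP[_ le_R] := size_regular_group_bounds.
by rewrite /sample_deficit -(size_group_concat (fun i => regular_samples w (S i))) -/R; lia.
Qed.

Lemma size_extra_samples : size extra_samples = sample_deficit.
Proof.
rewrite /extra_samples size_flatten_option -size_filter.
by rewrite (filter_iota_ltn 0 sample_deficit_le) size_iota.
Qed.

Lemma size_sample_sequence : size sample_sequence = p * v.+1.
Proof.
have /andP[le_R _] := size_regular_group_bounds.
rewrite (perm_size perm_sample_sequence) size_cat size_extra_samples /sample_deficit.
by rewrite -(size_group_concat (fun i => regular_samples w (S i))) -/R subnKC.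
Qed.

Lemma sorted_sample_sequence : sorted <%O sample_sequence.
Proof.
rewrite lt_sorted_uniq_le sort_sorted ?andbT; last exact: le_total.
rewrite sort_uniq; apply: (uniq_flatten_map_subset (G := S)) uniq_A => i.
rewrite mem_iota add0n => /andP[_ lt_ip].
have uniq_Si : uniq (S i) by apply: uniq_flatten_map_mem uniq_A _; rewrite mem_iota.
case: ifP => [lt_id | _]; last first.
  by rewrite cats0 uniq_regular_samples //; split=> // x; apply: mem_regular_samples.
have [e_in e_new] := extra_new lt_id.
rewrite cat_uniq uniq_regular_samples //= orbF andbT; split=> // x.
by rewrite mem_cat inE => /orP[/(mem_regular_samples w_gt0) | /eqP ->].
Qed.

Lemma sample_sequence_rank_approx : rank_approx w p sample_sequence A.
Proof.
move=> P dcP; have /andP[lo hi] := group_samples_count_bounds w_gt0 sorted_S dcP.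
have le_X : count P extra_samples <= p.
  by apply: leq_trans (count_size _ _) _; rewrite size_extra_samples sample_deficit_le.
have count_V : count P sample_sequence = count P R + count P extra_samples.
  by rewrite (permP perm_sample_sequence) count_cat.
have := leq_mul (leqnn w) le_X; rewrite count_V -/R -/A !mulnDr in lo hi *; lia.
Qed.

End SampleSequence.

Section GroupStep.
Context {disp : Order.disp_t} {T : orderType disp}.

Definition group_of (st : nat -> seq T) (p g : nat) : nat -> seq T :=
  fun i => st (g * p + i).

Variables (r v q : nat) (S S' : nat -> seq T).
Hypotheses (r_gt0 : 0 < r) (q_gt0 : 0 < q).
Hypotheses (sorted_S : forall i, i < r * q -> sorted <=%O (S i)).
Hypotheses (uniq_A : uniq (group_concat S (r * q))).
Hypothesis step : ms_group_step r v (r * q) S S'.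

Let A := group_concat S (r * q).

Lemma ms_group_step_bounds j : j < r -> let B := group_concat (group_of S' q j) q in
  [/\ uniq B, size B * r * v.+1 <= size A * (v.+1 + 2 * r)
    & forall i, i < q -> sorted <=%O (group_of S' q j i) /\
        size (group_of S' q j i) * (r * q) * v.+1 <= size A * (v.+1 + 2 * r)].
Proof.
move=> lt_jr B; case: step => w [w_gt0 [size_A [e [extra_new buckets]]]].
rewrite -/A in size_A; rewrite mulKn // -/A -/(sample_sequence w v (r * q) S e) in buckets.
have [perm_B sorted_size] := buckets j lt_jr.
have bucket_le : size [seq x <- A | in_bucket (sample_sequence w v (r * q) S e) r j x]
                 <= w * (q * v.+1 + 2 * (r * q)).
  rewrite size_filter; apply: count_bucket_le => //; rewrite ?muln_gt0 ?q_gt0 //.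
  - exact: sorted_sample_sequence.
  - by rewrite size_sample_sequence // mulnA.
  - exact: sample_sequence_rank_approx.
split.
- by rewrite (perm_uniq perm_B) filter_uniq.
- rewrite /B (perm_size perm_B) size_A.
  apply: leq_trans (leq_mul (leq_mul bucket_le (leqnn r)) (leqnn v.+1)) _.
  by apply: eq_leq; ring.
move=> i lt_iq; have [sorted_i size_i] := sorted_size i lt_iq; split=> //.
have : size (group_of S' q j i) <= w * (v.+1 + 2 * r).
  by rewrite -(leq_pmul2r q_gt0) size_i; apply: leq_trans bucket_le _; apply: eq_leq; ring.
move=> le_i; apply: leq_trans (leq_mul (leq_mul le_i (leqnn (r * q))) (leqnn v.+1)) _.
by rewrite size_A; apply: eq_leq; ring.
Qed.

End GroupStep.

Lemma leq_mul_ratio a b c x y x' y' :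
  a * x <= b * y -> b * x' <= c * y' -> a * (x * x') <= c * (y * y').
Proof.
move=> le_ab le_bc; apply: leq_trans (_ : b * y * x' <= _).
  by rewrite mulnA leq_mul2r le_ab orbT.
by rewrite mulnAC [y * y']mulnC mulnA leq_mul2r le_bc orbT.
Qed.

Section Levels.
Context {disp : Order.disp_t} {T : orderType disp}.
Implicit Types (st : nat -> nat -> seq T).

Lemma group_of_subgroup (s : nat -> seq T) r q g j i :
  group_of (group_of s (r * q) g) q j i = group_of s q (g * r + j) i.
Proof. by rewrite /group_of; congr s; ring. Qed.

Lemma group_concat_subgroup (s : nat -> seq T) r q g j :
  group_concat (group_of (group_of s (r * q) g) q j) q
  = group_concat (group_of s q (g * r + j)) q.
Proof. by rewrite /group_concat; congr flatten; apply: eq_map => i; rewrite group_of_subgroup. Qed.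

Definition level_invariant r k v n st t : Prop :=
  forall g, g < r ^ t ->
    let S := group_of (st t) (r ^ (k - t)) g in
    [/\ forall i, i < r ^ (k - t) -> sorted <=%O (S i),
        uniq (group_concat S (r ^ (k - t)))
      & size (group_concat S (r ^ (k - t))) * (r ^ t * v.+1 ^ t) <= n * (v.+1 + 2 * r) ^ t].

Lemma level_invariant0 r k v (input : nat -> seq T) st :
  (forall i, st 0 i = sort <=%O (input i)) ->
  uniq (flatten [seq input i | i <- iota 0 (r ^ k)]) ->
  level_invariant r k v (\sum_(i < r ^ k) size (input i)) st 0.
Proof.
move=> st0 uniq_input g; rewrite ltnS leqn0 subn0 => /eqP -> /=.
have perm_input : perm_eq (group_concat (group_of (st 0) (r ^ k) 0) (r ^ k))
                          (flatten [seq input i | i <- iota 0 (r ^ k)]).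
  apply/permP => a; rewrite /group_concat !count_flatten -!map_comp.
  by congr sumn; apply: eq_map => i /=; rewrite /group_of mul0n add0n st0 count_sort.
split.
- by move=> i _; rewrite /group_of mul0n add0n st0 sort_sorted //; apply: le_total.
- by rewrite (perm_uniq perm_input).
- rewrite size_group_concat !muln1; apply/eq_leq/eq_bigr => i _.
  by rewrite /group_of mul0n add0n st0 size_sort.
Qed.

Variables (r k v n : nat) (st : nat -> nat -> seq T) (t : nat).
Hypotheses (r_gt0 : 0 < r) (lt_tk : t < k).
Hypotheses (inv_t : level_invariant r k v n st t).
Hypotheses (level : ms_level r k v t.+1 (st t) (st t.+1)).

Let q := r ^ (k - t.+1).

Lemma level_group_bounds g j : g < r ^ t -> j < r ->
  let S := group_of (st t) (r * q) g in
  let B := group_concat (group_of (st t.+1) q (g * r + j)) q in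
  [/\ uniq B, size B * (r * v.+1) <= size (group_concat S (r * q)) * (v.+1 + 2 * r),
      forall i, i < q -> sorted <=%O (group_of (st t.+1) q (g * r + j) i) /\
        size (group_of (st t.+1) q (g * r + j) i) * (r * q * v.+1)
          <= size (group_concat S (r * q)) * (v.+1 + 2 * r)
    & size (group_concat S (r * q)) * (r ^ t * v.+1 ^ t) <= n * (v.+1 + 2 * r) ^ t].
Proof.
move=> lt_g lt_j S B.
have rq : r ^ (k - t) = r * q by rewrite /q -expnS subnSK.
have [sorted_S uniq_S size_S] := inv_t lt_g; rewrite rq -/S in sorted_S uniq_S size_S.
have step := level lt_g; rewrite /= subSS rq in step.
have q_gt0 : 0 < q by rewrite expn_gt0 r_gt0.
have [uniq_B size_B sizes] := ms_group_step_bounds r_gt0 q_gt0 sorted_S uniq_S step lt_j.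
rewrite group_concat_subgroup in uniq_B size_B; split=> //.
- by rewrite mulnA.
- by move=> i lt_iq; rewrite -group_of_subgroup mulnA; apply: sizes.
Qed.

Lemma level_invariantS : level_invariant r k v n st t.+1.
Proof.
move=> g' lt_g' S'; rewrite -/q in S' *.
have lt_g : g' %/ r < r ^ t by rewrite ltn_divLR // -expnSr.
have [uniq_B size_B sizes size_S] := level_group_bounds lt_g (ltn_pmod g' r_gt0).
rewrite -divn_eq in uniq_B size_B sizes; split=> //.
- by move=> i /sizes[].
- by rewrite !expnS mulnACA; apply: leq_mul_ratio size_B size_S.
Qed.

Lemma level_pe_size i : i < r ^ k ->
  size (st t.+1 i) * (r ^ k * v.+1 ^ t.+1) <= n * (v.+1 + 2 * r) ^ t.+1.
Proof.
move=> lt_i; have q_gt0 : 0 < q by rewrite expn_gt0 r_gt0.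
have rk : r ^ k = r ^ t * (r * q).
  by rewrite /q -expnS -expnD subnSK // subnKC // ltnW.
have lt_g : i %/ q %/ r < r ^ t by rewrite !ltn_divLR // -mulnA -rk.
have [_ _ sizes size_S] := level_group_bounds lt_g (ltn_pmod (i %/ q) r_gt0).
have [_] := sizes (i %% q) (ltn_pmod i q_gt0).
rewrite -divn_eq /group_of -divn_eq => size_i.
by rewrite rk !expnS [r ^ t * _]mulnC mulnACA; apply: leq_mul_ratio size_i size_S.
Qed.

End Levels.

Section Execution.
Context {disp : Order.disp_t} {T : orderType disp}.
Variables (r k v : nat) (input : nat -> seq T) (st : nat -> nat -> seq T).
Hypotheses (r_gt0 : 0 < r) (uniq_input : uniq (flatten [seq input i | i <- iota 0 (r ^ k)])).
Hypothesis exec : ms_execution r k v input st.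

Let n := \sum_(i < r ^ k) size (input i).

Lemma ms_execution_invariant t : t <= k -> level_invariant r k v n st t.
Proof.
case: exec => st0 levels; elim: t => [|t IHt] le_tk; first exact: level_invariant0.
by apply: level_invariantS (IHt (ltnW le_tk)) (levels _ _) => //; rewrite ltnS le_tk.
Qed.

Lemma ms_execution_pe_size t i : 0 < t <= k -> i < r ^ k ->
  size (st t i) * (r ^ k * v.+1 ^ t) <= n * (v.+1 + 2 * r) ^ t.
Proof.
case: t => [|t] // /andP[_ lt_tk]; have [_ levels] := exec.
exact: (level_pe_size r_gt0 lt_tk (ms_execution_invariant (ltnW lt_tk)) (levels t.+1 lt_tk)).
Qed.

End Execution.

Section GrowthFactor.
Variable R : realFieldType.
Local Open Scope ring_scope.

Lemma bernoulli_ineq (x : R) n : -1 <= x -> 1 + n%:R * x <= (1 + x) ^+ n.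
Proof.
move=> x_ge; elim: n => [|n IHn]; first by rewrite mul0r addr0.
rewrite exprS -natr1; apply: le_trans (ler_wpM2l _ IHn); last by lra.
have := mulr_ge0 (ler0n R n) (sqr_ge0 x); nra.
Qed.

Lemma expn_inv_double_le2 k : (0 < k)%N -> (1 + ((2 * k)%:R)^-1) ^+ k <= 2 :> R.
Proof.
move=> k_gt0; set h := ((2 * k)%:R)^-1 : R.
have kh : k%:R * h = 1 / 2.
  by rewrite /h natrM invfM mulrCA mulfV ?mulr1 ?mul1r // pnatr_eq0 -lt0n.
have h_ge0 : 0 <= h by rewrite invr_ge0 ler0n.
have k_ge1 : 1 <= k%:R :> R by rewrite ler1n.
have h_le1 : h <= 1 by nra.
have lower := bernoulli_ineq k (_ : -1 <= - h).
have prod_le1 : (1 + h) ^+ k * (1 + - h) ^+ k <= 1.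
  by rewrite -exprMn; apply: exprn_ile1; nra.
have : 0 <= (1 + h) ^+ k by apply: exprn_ge0; lra.
have := lower ltac:(lra); rewrite mulrN kh; nra.
Qed.

Lemma growth_factor_le (c : R) m k r v t : 0 < c -> 4 / c <= m%:R ->
  (0 < k)%N -> c * (k * r)%:R <= v%:R -> (t <= k)%N ->
  ((v.+1 + 2 * r)%:R / v.+1%:R) ^+ t <= 2 ^+ m :> R.
Proof.
move=> c_gt0 m_ge k_gt0 v_ge le_tk; set x := _ / _.
set h := ((2 * k)%:R)^-1 : R.
have h_gt0 : 0 < h by rewrite invr_gt0 ltr0n muln_gt0.
have v1_gt0 : 0 < v.+1%:R :> R by rewrite ltr0n.
have x_ge1 : 1 <= x by rewrite ler_pdivlMr // mul1r ler_nat leq_addr.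
have x_le : x <= 1 + m%:R * h.
  have hk : h * (2 * k%:R) = 1 by rewrite /h -natrM mulVf // pnatr_eq0 -lt0n muln_gt0.
  have mc : 4 <= m%:R * c by rewrite -ler_pdivrMr.
  rewrite natrM in v_ge.
  have kr_ge0 : 0 <= k%:R * r%:R :> R by rewrite mulr_ge0 ?ler0n.
  have key : 4 * (k%:R * r%:R) <= m%:R * v%:R :> R.
    apply: le_trans (ler_wpM2r kr_ge0 mc) _; rewrite -mulrA.
    by apply: ler_wpM2l => //; apply: ler0n.
  have hkey := ler_wpM2l (ltW h_gt0) key.
  have : h * (4 * (k%:R * r%:R)) = 2 * r%:R.
    by transitivity (h * (2 * k%:R) * (2 * r%:R)); [ring | rewrite hk mul1r].
  rewrite ler_pdivrMr // natrD natrM -natr1.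
  have := ler0n R m; have := ler0n R v; nra.
have x_le_pow : x <= (1 + h) ^+ m.
  by apply: le_trans x_le (bernoulli_ineq m _); lra.
apply: le_trans (ler_weXn2l x_ge1 le_tk) _.
apply: le_trans (_ : ((1 + h) ^+ m) ^+ k <= _).
  by apply: lerXn2r => //; rewrite nnegrE; lra.
rewrite -exprM mulnC exprM; apply: lerXn2r; rewrite ?nnegrE ?exprn_ge0 //; first by lra.
exact: expn_inv_double_le2.
Qed.

Lemma ler_nat_ratio (a p e n d : nat) : (0 < p)%N -> (0 < e)%N ->
  (a * (p * e) <= n * d)%N -> a%:R <= n%:R / p%:R * (d%:R / e%:R) :> R.
Proof.
by move=> p_gt0 e_gt0; rewrite -(ler_nat R) !natrM mulf_div ler_pdivlMr ?mulr_gt0 ?ltr0n.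
Qed.

End GrowthFactor.

Local Open Scope ring_scope.

Theorem theorem3 (c1 c2 a1 a2 : rat) :
  0 < c1 -> 0 < c2 -> 0 < a1 -> 0 < a2 ->
  exists C : rat,
    forall (disp : Order.disp_t) (T : orderType disp) (k r p v n : nat)
      (input : nat -> seq T) (st : nat -> nat -> seq T),
    (1 <= k)%N -> p = (r ^ k)%N ->
    uniq (flatten [seq input i | i <- iota 0 p]) ->
    n = (\sum_(i < p) size (input i))%N ->
    (forall i, (i < p)%N ->
       a1 * n%:R / p%:R <= (size (input i))%:R <= a2 * n%:R / p%:R) ->
    c1 * (k * r)%:R <= v%:R <= c2 * (k * r)%:R ->
    ms_execution r k v input st ->
    forall t i, (t <= k)%N -> (i < p)%N ->
      (size (st t i))%:R <= C * n%:R / p%:R.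
Proof.
move=> c1_gt0 _ _ a2_gt0; pose m := Num.Def.archi_bound (4 / c1).
have m_ge : 4 / c1 <= m%:R by apply/ltW/archi_boundP; rewrite divr_ge0 // ltW.
exists (a2 + 2 ^+ m) => disp T k r p v n input st k_gt0 p_def uniq_input n_def size_input.
move=> /andP[v_ge _] exec t i le_tk lt_ip; subst p.
have r_gt0 : (0 < r)%N by rewrite lt0n; apply: contraTneq lt_ip => ->; rewrite exp0n.
have le_C (y : rat) : y <= a2 \/ y <= 2 ^+ m ->
    y * n%:R / (r ^ k)%:R <= (a2 + 2 ^+ m) * n%:R / (r ^ k)%:R.
  move=> le_y; rewrite -!mulrA ler_wpM2r ?divr_ge0 ?ler0n //.
  have : 0 <= 2 ^+ m :> rat by apply: exprn_ge0.
  by move: (2 ^+ m) le_y => M [] le_y M_ge0; lra.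
case: t le_tk => [|t] le_tk.
  have [exec0 _] := exec; rewrite exec0 size_sort.
  have /andP[_ le_a2] := size_input i lt_ip.
  by apply: le_trans le_a2 (le_C _ _); left.
have := ms_execution_pe_size r_gt0 uniq_input exec (t := t.+1) le_tk lt_ip; rewrite -n_def.
move=> /(ler_nat_ratio rat) le_size.
apply: le_trans (le_size _ _) _; rewrite ?expn_gt0 ?r_gt0 //.
rewrite (natrX _ (v.+1 + 2 * r)) (natrX _ v.+1) -expr_div_n [X in X <= _]mulrC mulrA.
apply: le_C; right.
exact: growth_factor_le c1_gt0 m_ge k_gt0 v_ge le_tk.
Qed.
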